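(* Let $0<a<b$ and, for $i=1,2$, let $f_i=(f_{i,1},\dots,f_{i,m_i})^T$ be a vector of linearly independent continuously differentiable functions on $[a,b]$. For $i=1,2$ fix design points $a=t_{i,1}<t_{i,2}<\dots<t_{i,n_i}=b$, and set $$M_i=\int_a^b\dot f_i(t)\dot f_i^T(t)\,dt,\qquad C_i=M_i+\frac{f_i(a)f_i^T(a)}{a},$$ $$B_i=\sum_{j=2}^{n_i}\frac{[f_i(t_{i,j})-f_i(t_{i,j-1})][f_i(t_{i,j})-f_i(t_{i,j-1})]^T}{t_{i,j}-t_{i,j-1}}.$$ Assume $C_i$ and $B_i$ are non-singular for $i=1,2$. For weight vectors $\omega=(\omega_{i,j})_{i=1,2;\,j=2,\dots,n_i}$ with $\omega_{i,j}\in\mathbb{R}^{m_i}$ satisfying the unbiasedness constraints $$M_i=\sum_{j=2}^{n_i}\omega_{i,j}\big(f_i(t_{i,j})-f_i(t_{i,j-1})\big)^T,\qquad i=1,2,$$ define for $t\in[a,b]$ $$g_n(t,\omega)=\sum_{i=1}^2 f_i^T(t)\Big\{-C_i^{-1}M_iC_i^{-1}+\sum_{j=2}^{n_i}(t_{i,j}-t_{i,j-1})\,C_i^{-1}\omega_{i,j}\omega_{i,j}^TC_i^{-1}+C_i^{-1}\Big\}f_i(t),$$ and $\mu_{p,n}(\omega)=\big(\int_a^b g_n(t,\omega)^p\,dt\big)^{1/p}$ for $p\in[1,\infty)$, $\mu_{\infty,n}(\omega)=\sup_{t\in[a,b]}g_n(t,\omega)$. Then the weights $$\omega_{i,j}^*=M_iB_i^{-1}\frac{f_i(t_{i,j})-f_i(t_{i,j-1})}{t_{i,j}-t_{i,j-1}},\qquad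 j=2,\dots,n_i,\ i=1,2,$$ satisfy the unbiasedness constraints, and for every $p\in[1,\infty]$ they minimise $\mu_{p,n}(\omega)$ over all weight vectors satisfying the unbiasedness constraints. Equivalently, in terms of $\gamma_{i,j}=\omega_{i,j}\sqrt{t_{i,j}-t_{i,j-1}}$, the minimiser is $\gamma^*_{i,j}=M_iB_i^{-1}\frac{f_i(t_{i,j})-f_i(t_{i,j-1})}{\sqrt{t_{i,j}-t_{i,j-1}}}$.
   Context: Interpretation: in the models $Y_i(t_{i,j})=f_i^T(t_{i,j})\theta_i+\varepsilon_i(t_{i,j})$ with independent Brownian motion errors $\varepsilon_1,\varepsilon_2$, the estimators $\hat\theta_{i,n_i}=C_i^{-1}\{\sum_{j=2}^{n_i}\omega_{i,j}(Y_i(t_{i,j})-Y_i(t_{i,j-1}))+\frac{f_i(a)}{a}Y_i(a)\}$ are unbiased exactly under the stated constraints, and then $g_n(t,\omega)=\mathrm{Var}(f_1^T(t)\hat\theta_{1,n_1}-f_2^T(t)\hat\theta_{2,n_2})$; the claim is the purely matrix-analytic minimisation statement above. *)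

From Stdlib Require Import Reals Lra.
Open Scope R_scope.

Fixpoint sumR (n : nat) (g : nat -> R) : R :=
  match n with O => 0 | S n' => sumR n' g + g n' end.

Definition sumRange (lo hi : nat) (g : nat -> R) : R :=
  sumR (hi - lo) (fun k => g (lo + k)%nat).

(* vectors in R^m / m x m matrices, indices 0..m-1 *)
Definition vec := nat -> R.
Definition mat := nat -> nat -> R.

Definition mmul (m : nat) (A B : mat) : mat :=
  fun i j => sumR m (fun k => A i k * B k j).
Definition mvec (m : nat) (A : mat) (v : vec) : vec :=
  fun i => sumR m (fun k => A i k * v k).
Definition outer (u v : vec) : mat := fun i j => u i * v j.
Definition idm : mat := fun i j => if Nat.eqb i j then 1 else 0.
Definition madd (A B : mat) : mat := fun i j => A i j + B i j.
Definition mopp (A : mat) : mat := fun i j => - A i j.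
Definition mscale (c : R) (A : mat) : mat := fun i j => c * A i j.

Definition is_inverse (m : nat) (A Ainv : mat) : Prop :=
  forall i j, (i < m)%nat -> (j < m)%nat ->
    mmul m A Ainv i j = idm i j /\ mmul m Ainv A i j = idm i j.

Definition qform (m : nat) (A : mat) (v : vec) : R :=
  sumR m (fun i => sumR m (fun j => v i * A i j * v j)).

(* power for a nonnegative base (x^p with 0^p = 0) *)
Definition rpow (x y : R) : R := if Rlt_dec 0 x then Rpower x y else 0.

(* A regression model i: m functions f_k (k < m) with derivatives df_k,
   and n design points pt 0 < ... < pt (n-1)  (0-based: pt j = t_{i,j+1}). *)
Record model := Model {
  dim : nat;
  fn : nat -> R -> R;
  dfn : nat -> R -> R;
  npts : nat;
  pt : nat -> R }.

Definition fvec (md : model) (t : R) : vec := fun k => fn md k t.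
(* increment f(t_j) - f(t_{j-1}) and step t_j - t_{j-1}, for 1 <= j <= n-1 *)
Definition dlt (md : model) (j : nat) : vec :=
  fun k => fn md k (pt md j) - fn md k (pt md (j - 1)).
Definition hstep (md : model) (j : nat) : R := pt md j - pt md (j - 1).

(* f continuously differentiable on [a,b] (one-sided at endpoints),
   df its derivative; components linearly independent on [a,b];
   design a = t_1 < ... < t_n = b. *)
Definition model_ok (a b : R) (md : model) : Prop :=
  (forall k, (k < dim md)%nat -> forall t, a <= t <= b ->
     limit1_in (fun s => (fn md k s - fn md k t) / (s - t))
               (fun s => a <= s <= b /\ s <> t) (dfn md k t) t /\
     limit1_in (dfn md k) (fun s => a <= s <= b) (dfn md k t) t) /\
  (forall c : nat -> R,
     (forall t, a <= t <= b -> sumR (dim md) (fun k => c k * fn md k t) = 0) ->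
     forall k, (k < dim md)%nat -> c k = 0) /\
  pt md 0 = a /\ pt md (npts md - 1) = b /\
  (forall j, (j + 1 < npts md)%nat -> pt md j < pt md (j + 1)).

Definition is_Mmat (a b : R) (md : model) (M : mat) : Prop :=
  forall k l, (k < dim md)%nat -> (l < dim md)%nat ->
    forall pr : Riemann_integrable (fun t => dfn md k t * dfn md l t) a b,
      M k l = RiemannInt pr.

Definition Cmat (a : R) (md : model) (M : mat) : mat :=
  fun k l => M k l + fn md k a * fn md l a / a.

Definition Bmat (md : model) : mat :=
  fun k l => sumRange 1 (npts md)
               (fun j => dlt md j k * dlt md j l / hstep md j).

(* weights: om j : vec (the weight omega_{i,j} in R^m), 1 <= j <= n-1 *)
Definition unbiased (md : model) (M : mat) (om : nat -> vec) : Prop :=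
  forall k l, (k < dim md)%nat -> (l < dim md)%nat ->
    M k l = sumRange 1 (npts md) (fun j => om j k * dlt md j l).

Definition Gmat (md : model) (M Cinv : mat) (om : nat -> vec) : mat :=
  let m := dim md in
  fun k l =>
    - mmul m (mmul m Cinv M) Cinv k l
    + sumRange 1 (npts md)
        (fun j => hstep md j * mmul m (mmul m Cinv (outer (om j) (om j))) Cinv k l)
    + Cinv k l.

Definition gterm (md : model) (M Cinv : mat) (om : nat -> vec) (t : R) : R :=
  qform (dim md) (Gmat md M Cinv om) (fvec md t).

Definition gn (md1 md2 : model) (M1 M2 C1inv C2inv : mat)
    (om1 om2 : nat -> vec) (t : R) : R :=
  gterm md1 M1 C1inv om1 t + gterm md2 M2 C2inv om2 t.

Definition wstar (md : model) (M Binv : mat) : nat -> vec :=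
  fun j k => mvec (dim md) M (mvec (dim md) Binv (dlt md j)) k / hstep md j.

From Stdlib Require Import Reals Lra Lia FunctionalExtensionality.
Open Scope R_scope.

(* Write v := C^-1 f(t) and w for the weights omega-star.  Since M is a Gram matrix, C and
   C^-1 are symmetric, so
   f^T G(omega) f = v^T (C - M) v + sum_j h_j (v . omega_j)^2, and only the last sum depends
   on the weights.  For every unbiased omega the cross term sum_j h_j (v . omega_j)(v . w_j)
   equals v^T M B^-1 M v, because h_j w_j is linear in the increment delta_j and
   unbiasedness fixes sum_j omega_j delta_j^T = M.  As w is itself unbiased, expanding
   sum_j h_j (v . (omega_j - w_j))^2 >= 0 gives g_n(t, w) <= g_n(t, omega) for every t,
   and each criterion mu_p is monotone in g_n. *)

Lemma sumR_ext n f g : (forall i, (i < n)%nat -> f i = g i) -> sumR n f = sumR n g.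
Proof.
  induction n as [|n IH]; simpl; intros H; [reflexivity|].
  rewrite IH, H; [reflexivity | lia | intros; apply H; lia].
Qed.

Lemma sumR_add n f g : sumR n (fun i => f i + g i) = sumR n f + sumR n g.
Proof. induction n; simpl; [ring | rewrite IHn; ring]. Qed.

Lemma sumR_mult_l n c f : sumR n (fun i => c * f i) = c * sumR n f.
Proof. induction n; simpl; [ring | rewrite IHn; ring]. Qed.

Lemma sumR_mult_r n c f : sumR n (fun i => f i * c) = sumR n f * c.
Proof. induction n; simpl; [ring | rewrite IHn; ring]. Qed.

Lemma sumR_const0 n : sumR n (fun _ => 0) = 0.
Proof. induction n; simpl; [ring | rewrite IHn; ring]. Qed.

Lemma sumR_le n f g : (forall i, (i < n)%nat -> f i <= g i) -> sumR n f <= sumR n g.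
Proof.
  induction n as [|n IH]; simpl; intros H; [lra|].
  assert (f n <= g n) by (apply H; lia).
  assert (sumR n f <= sumR n g) by (apply IH; intros; apply H; lia).
  lra.
Qed.

Lemma sumR_swap n m F :
  sumR n (fun i => sumR m (fun j => F i j)) = sumR m (fun j => sumR n (fun i => F i j)).
Proof.
  induction n; simpl; [now rewrite sumR_const0 | now rewrite IHn, <- sumR_add].
Qed.

Lemma sumR_prod n m f g :
  sumR n f * sumR m g = sumR n (fun i => sumR m (fun j => f i * g j)).
Proof.
  rewrite <- sumR_mult_r. apply sumR_ext; intros.
  now rewrite <- sumR_mult_l.
Qed.

Lemma sumR_idm m l g : (l < m)%nat -> sumR m (fun r => g r * idm r l) = g l.
Proof.
  intros Hl. induction m as [|m IH]; simpl; [lia|].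
  unfold idm at 2. destruct (Nat.eqb_spec m l) as [->|Hne].
  - rewrite (sumR_ext _ _ (fun _ => 0)), sumR_const0; [ring|].
    intros r Hr. unfold idm. destruct (Nat.eqb_spec r l); [lia | ring].
  - rewrite IH by lia. ring.
Qed.

Lemma idm_sym i j : idm i j = idm j i.
Proof. unfold idm. now rewrite Nat.eqb_sym. Qed.

Definition dot (m : nat) (u v : vec) : R := sumR m (fun k => u k * v k).

Definition tmvec (m : nat) (A : mat) (u : vec) : vec :=
  fun j => sumR m (fun i => u i * A i j).

Definition symmetric (m : nat) (A : mat) : Prop :=
  forall i j, (i < m)%nat -> (j < m)%nat -> A i j = A j i.

Lemma dot_comm m u v : dot m u v = dot m v u.
Proof. apply sumR_ext; intros; ring. Qed.

Lemma dot_mvec m A u v : dot m u (mvec m A v) = dot m (tmvec m A u) v.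
Proof.
  unfold dot, tmvec, mvec.
  transitivity (sumR m (fun i => sumR m (fun k => u i * A i k * v k))).
  - apply sumR_ext; intros. rewrite <- sumR_mult_l. apply sumR_ext; intros; ring.
  - rewrite sumR_swap. apply sumR_ext; intros. now rewrite sumR_mult_r.
Qed.

Lemma mvec_symmetric m A v i :
  symmetric m A -> (i < m)%nat -> mvec m A v i = tmvec m A v i.
Proof.
  intros HA Hi. apply sumR_ext; intros k Hk. rewrite (HA i k) by assumption. ring.
Qed.

Lemma mvec_ext m A u v i :
  (forall q, (q < m)%nat -> u q = v q) -> mvec m A u i = mvec m A v i.
Proof. intros Huv. apply sumR_ext; intros. now rewrite Huv. Qed.

Lemma mvec_sumR m N A (u : nat -> vec) c i :
  sumR N (fun j => mvec m A (u j) i * c j) = mvec m A (fun q => sumR N (fun j => u j q * c j)) i.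
Proof.
  unfold mvec.
  transitivity (sumR N (fun j => sumR m (fun k => A i k * (u j k * c j)))).
  - apply sumR_ext; intros. rewrite <- sumR_mult_r. apply sumR_ext; intros; ring.
  - rewrite sumR_swap. apply sumR_ext; intros. now rewrite <- sumR_mult_l.
Qed.

Lemma inverse_symmetric m A Ainv :
  symmetric m A -> is_inverse m A Ainv -> symmetric m Ainv.
Proof.
  intros HA HI k l Hk Hl.
  assert (left_inv : forall i j, (i < m)%nat -> (j < m)%nat ->
            sumR m (fun q => Ainv i q * A q j) = idm i j)
    by (intros i j Hi Hj; apply (HI i j Hi Hj)).
  rewrite <- (sumR_idm m l (Ainv k)) by assumption.
  transitivity (sumR m (fun r => sumR m (fun q => Ainv k r * Ainv l q * A r q))).
  - apply sumR_ext; intros r Hr.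
    rewrite idm_sym, <- left_inv, <- sumR_mult_l by assumption.
    apply sumR_ext; intros q Hq. rewrite (HA q r) by assumption. ring.
  - rewrite sumR_swap, <- (sumR_idm m k (Ainv l)) by assumption.
    apply sumR_ext; intros q Hq.
    rewrite idm_sym, <- left_inv, <- sumR_mult_l by assumption.
    apply sumR_ext; intros; ring.
Qed.

Lemma qform_add m A B v :
  qform m (fun k l => A k l + B k l) v = qform m A v + qform m B v.
Proof.
  unfold qform. rewrite <- sumR_add. apply sumR_ext; intros.
  rewrite <- sumR_add. apply sumR_ext; intros; ring.
Qed.

Lemma qform_sumR m N c (T : nat -> mat) v :
  qform m (fun k l => sumR N (fun j => c j * T j k l)) v = sumR N (fun j => c j * qform m (T j) v).
Proof.
  unfold qform.
  transitivity (sumR m (fun k => sumR N (fun j => sumR m (fun l => c j * (v k * T j k l * v l))))).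
  - apply sumR_ext; intros k Hk. rewrite <- sumR_swap. apply sumR_ext; intros l Hl.
    rewrite <- sumR_mult_l, <- sumR_mult_r. apply sumR_ext; intros; ring.
  - rewrite sumR_swap. apply sumR_ext; intros j Hj. rewrite <- sumR_mult_l.
    apply sumR_ext; intros. now rewrite <- sumR_mult_l.
Qed.

Lemma qform_outer_sandwich m A B u w f :
  qform m (mmul m (mmul m A (outer u w)) B) f = dot m f (mvec m A u) * dot m (tmvec m B w) f.
Proof.
  unfold qform, dot, tmvec, mvec. rewrite sumR_prod.
  apply sumR_ext; intros k Hk. apply sumR_ext; intros l Hl.
  unfold mmul, outer.
  transitivity (f k * (sumR m (fun q => A k q * u q) * sumR m (fun r => w r * B r l)) * f l);
    [|ring].
  f_equal; f_equal. rewrite sumR_prod, sumR_swap. apply sumR_ext; intros.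
  rewrite <- sumR_mult_r. apply sumR_ext; intros; ring.
Qed.

Lemma qform_sym_outer_sandwich m C u f :
  symmetric m C -> qform m (mmul m (mmul m C (outer u u)) C) f = dot m (tmvec m C f) u ^ 2.
Proof.
  intros HC. rewrite qform_outer_sandwich, dot_mvec, (dot_comm m (tmvec m C u)).
  replace (dot m f (tmvec m C u)) with (dot m f (mvec m C u)).
  - rewrite dot_mvec. ring.
  - apply sumR_ext; intros. now rewrite mvec_symmetric.
Qed.

(* The hypothesis says that y is h-orthogonal to x - y, so this is Pythagoras. *)
Lemma weighted_sq_le N (h x y : nat -> R) :
  (forall i, (i < N)%nat -> 0 <= h i) ->
  sumR N (fun i => h i * x i * y i) = sumR N (fun i => h i * y i * y i) ->
  sumR N (fun i => h i * y i ^ 2) <= sumR N (fun i => h i * x i ^ 2).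
Proof.
  intros Hh Horth.
  assert (Hnonneg : 0 <= sumR N (fun i => h i * (x i - y i) ^ 2)).
  { rewrite <- (sumR_const0 N). apply sumR_le; intros i Hi.
    apply Rmult_le_pos; [auto | apply pow2_ge_0]. }
  assert (Hexpand : sumR N (fun i => h i * (x i - y i) ^ 2) =
     sumR N (fun i => h i * x i ^ 2) + -2 * sumR N (fun i => h i * x i * y i)
     + sumR N (fun i => h i * y i * y i)).
  { rewrite <- sumR_mult_l, <- !sumR_add.
    apply sumR_ext; intros; ring. }
  assert (Hyy : sumR N (fun i => h i * y i ^ 2) = sumR N (fun i => h i * y i * y i))
    by (apply sumR_ext; intros; ring).
  lra.
Qed.

Definition clamp (a b s : R) : R := Rmax a (Rmin b s).

Lemma clamp_in a b s : a <= b -> a <= clamp a b s <= b.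
Proof. intros; unfold clamp, Rmax, Rmin; repeat destruct Rle_dec; lra. Qed.

Lemma clamp_id a b s : a <= s <= b -> clamp a b s = s.
Proof. intros; unfold clamp, Rmax, Rmin; repeat destruct Rle_dec; lra. Qed.

Lemma clamp_dist a b s x : a <= x <= b -> Rabs (clamp a b s - x) <= Rabs (s - x).
Proof.
  intros; unfold clamp, Rmax, Rmin; repeat destruct Rle_dec;
    unfold Rabs; repeat destruct Rcase_abs; lra.
Qed.

(* Stdlib's integrability criterion asks for continuity on all of R, so f is first
   extended constantly outside [a, b]. *)
Lemma Riemann_integrable_continuous_within a b f :
  a <= b ->
  (forall x, a <= x <= b -> limit1_in f (fun s => a <= s <= b) (f x) x) ->
  Riemann_integrable f a b.
Proof.
  intros Hab Hf.
  apply (@Riemann_integrable_ext (fun t => f (clamp a b t)) f a b).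
  - intros x Hx. rewrite Rmin_left, Rmax_right in Hx by lra. now rewrite clamp_id.
  - apply continuity_implies_RiemannInt; [assumption|]. intros x Hx eps Heps.
    destruct (Hf x Hx eps Heps) as [alp [Halp Hclose]]. exists alp; split; [assumption|].
    intros y [_ Hy]. simpl in *. unfold R_dist in *. rewrite (clamp_id a b x Hx).
    apply Hclose. split; [now apply clamp_in|]. simpl; unfold R_dist.
    eapply Rle_lt_trans; [apply clamp_dist|]; assumption.
Qed.

Lemma Mmat_symmetric a b md M :
  a < b -> model_ok a b md -> is_Mmat a b md M -> symmetric (dim md) M.
Proof.
  intros Hab [Hdiff _] HM k l Hk Hl.
  assert (pr : Riemann_integrable (fun t => dfn md k t * dfn md l t) a b).
  { apply Riemann_integrable_continuous_within; [lra|]. intros x Hx.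
    apply limit_mul; [apply (Hdiff k Hk x Hx) | apply (Hdiff l Hl x Hx)]. }
  assert (pr' : Riemann_integrable (fun t => dfn md l t * dfn md k t) a b)
    by (apply (@Riemann_integrable_ext _ _ a b (fun x _ => Rmult_comm _ _) pr)).
  rewrite (HM k l Hk Hl pr), (HM l k Hl Hk pr').
  apply RiemannInt_P18; [lra|]. intros; ring.
Qed.

Lemma Cinv_symmetric a b md M Cinv :
  a < b -> model_ok a b md -> is_Mmat a b md M ->
  is_inverse (dim md) (Cmat a md M) Cinv -> symmetric (dim md) Cinv.
Proof.
  intros Hab Hok HM. apply inverse_symmetric. intros k l Hk Hl. unfold Cmat.
  rewrite (Mmat_symmetric a b md M Hab Hok HM k l Hk Hl). unfold Rdiv; ring.
Qed.

Lemma hstep_pos a b md j :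
  model_ok a b md -> (1 <= j < npts md)%nat -> 0 < hstep md j.
Proof.
  intros (_ & _ & _ & _ & Hincr) Hj. unfold hstep.
  specialize (Hincr (j - 1)%nat ltac:(lia)). replace (j - 1 + 1)%nat with j in Hincr by lia.
  lra.
Qed.

Lemma wstar_unbiased md M Binv :
  is_inverse (dim md) (Bmat md) Binv -> unbiased md M (wstar md M Binv).
Proof.
  intros HB k l Hk Hl. set (m := dim md).
  transitivity (mvec m M (fun p => mvec m Binv (fun q => Bmat md q l) p) k).
  - rewrite <- (sumR_idm m l (M k)) by assumption. apply sumR_ext; intros p Hp.
    f_equal. symmetry. apply (HB p l Hp Hl).
  - unfold sumRange, wstar.
    rewrite (sumR_ext _ _ (fun j => mvec m M (mvec m Binv (dlt md (1 + j))) k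
                                     * (dlt md (1 + j) l / hstep md (1 + j))))
      by (intros; unfold m, Rdiv; ring).
    rewrite mvec_sumR. apply mvec_ext; intros p Hp.
    rewrite mvec_sumR. apply mvec_ext; intros q Hq.
    unfold Bmat, sumRange. apply sumR_ext; intros; unfold Rdiv; ring.
Qed.

Lemma gterm_decomp md M Cinv om t :
  symmetric (dim md) Cinv ->
  gterm md M Cinv om t =
    qform (dim md) (fun k l => - mmul (dim md) (mmul (dim md) Cinv M) Cinv k l + Cinv k l)
      (fvec md t)
    + sumRange 1 (npts md)
        (fun j => hstep md j * dot (dim md) (tmvec (dim md) Cinv (fvec md t)) (om j) ^ 2).
Proof.
  intros HC. set (m := dim md). unfold gterm, sumRange.
  replace (Gmat md M Cinv om) with
    (fun k l => (- mmul m (mmul m Cinv M) Cinv k l + Cinv k l)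
       + sumR (npts md - 1) (fun j => hstep md (1 + j)
           * mmul m (mmul m Cinv (outer (om (1 + j)%nat) (om (1 + j)%nat))) Cinv k l)).
  - rewrite qform_add, qform_sumR. f_equal. apply sumR_ext; intros.
    now rewrite qform_sym_outer_sandwich.
  - extensionality k; extensionality l. unfold Gmat, sumRange, m. ring.
Qed.

Lemma unbiased_cross md M om u c :
  unbiased md M om ->
  sumRange 1 (npts md) (fun j => dot (dim md) u (om j) * dot (dim md) c (dlt md j))
  = sumR (dim md) (fun s => sumR (dim md) (fun q => u s * M s q * c q)).
Proof.
  intros Hom. unfold sumRange, dot.
  transitivity (sumR (npts md - 1) (fun j => sumR (dim md) (fun s => sumR (dim md) (fun q =>
      u s * c q * (om (1 + j)%nat s * dlt md (1 + j) q))))).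
  - apply sumR_ext; intros. rewrite sumR_prod.
    apply sumR_ext; intros; apply sumR_ext; intros; ring.
  - rewrite sumR_swap. apply sumR_ext; intros s Hs. rewrite sumR_swap.
    apply sumR_ext; intros q Hq. rewrite (Hom s q Hs Hq). unfold sumRange.
    rewrite <- sumR_mult_l, <- sumR_mult_r. apply sumR_ext; intros; ring.
Qed.

Lemma hstep_dot_wstar md M Binv v j :
  hstep md j <> 0 ->
  hstep md j * dot (dim md) v (wstar md M Binv j)
  = dot (dim md) (tmvec (dim md) Binv (tmvec (dim md) M v)) (dlt md j).
Proof.
  intros Hh. rewrite <- !dot_mvec. unfold dot. rewrite <- sumR_mult_l.
  apply sumR_ext; intros. unfold wstar. field. assumption.
Qed.

Lemma gterm_wstar_le md M Cinv Binv om t :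
  (forall j, (1 <= j < npts md)%nat -> 0 < hstep md j) ->
  symmetric (dim md) Cinv -> is_inverse (dim md) (Bmat md) Binv -> unbiased md M om ->
  gterm md M Cinv (wstar md M Binv) t <= gterm md M Cinv om t.
Proof.
  intros Hh HC HB Hom. rewrite !gterm_decomp by assumption. apply Rplus_le_compat_l.
  set (v := tmvec (dim md) Cinv (fvec md t)).
  set (c := tmvec (dim md) Binv (tmvec (dim md) M v)).
  assert (cross : forall z, unbiased md M z ->
    sumR (npts md - 1) (fun j => hstep md (1 + j) * dot (dim md) v (z (1 + j)%nat)
                                   * dot (dim md) v (wstar md M Binv (1 + j)))
    = sumR (dim md) (fun s => sumR (dim md) (fun q => v s * M s q * c q))).
  { intros z Hz. rewrite <- (unbiased_cross md M z v c Hz). apply sumR_ext; intros.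
    unfold c. rewrite <- hstep_dot_wstar by (specialize (Hh (1 + i)%nat ltac:(lia)); lra).
    ring. }
  unfold sumRange. apply weighted_sq_le.
  - intros. left. apply Hh. lia.
  - rewrite cross by assumption. symmetry. apply cross, wstar_unbiased, HB.
Qed.

Lemma rpow_le_compat x y p : 0 < p -> x <= y -> rpow x p <= rpow y p.
Proof.
  intros Hp Hxy. unfold rpow. destruct (Rlt_dec 0 x), (Rlt_dec 0 y).
  - apply Rle_Rpower_l; lra.
  - lra.
  - left; apply exp_pos.
  - lra.
Qed.

Theorem theorem4p1 (a b : R) (md1 md2 : model)
  (M1 M2 C1inv C2inv B1inv B2inv : mat) :
  0 < a -> a < b ->
  model_ok a b md1 -> model_ok a b md2 ->
  is_Mmat a b md1 M1 -> is_Mmat a b md2 M2 ->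
  is_inverse (dim md1) (Cmat a md1 M1) C1inv ->
  is_inverse (dim md2) (Cmat a md2 M2) C2inv ->
  is_inverse (dim md1) (Bmat md1) B1inv ->
  is_inverse (dim md2) (Bmat md2) B2inv ->
  let w1 := wstar md1 M1 B1inv in
  let w2 := wstar md2 M2 B2inv in
  let g := gn md1 md2 M1 M2 C1inv C2inv in
  unbiased md1 M1 w1 /\ unbiased md2 M2 w2 /\
  (forall om1 om2 : nat -> vec,
     unbiased md1 M1 om1 -> unbiased md2 M2 om2 ->
     (forall p : R, 1 <= p ->
        forall (pr1 : Riemann_integrable (fun t => rpow (g w1 w2 t) p) a b)
               (pr2 : Riemann_integrable (fun t => rpow (g om1 om2 t) p) a b),
          rpow (RiemannInt pr1) (1 / p) <= rpow (RiemannInt pr2) (1 / p)) /\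
     (forall s1 s2 : R,
        is_lub (fun y => exists t, a <= t <= b /\ y = g w1 w2 t) s1 ->
        is_lub (fun y => exists t, a <= t <= b /\ y = g om1 om2 t) s2 ->
        s1 <= s2)).
Proof.
  intros _ Hab Ok1 Ok2 HM1 HM2 HC1 HC2 HB1 HB2 w1 w2 g.
  split; [now apply wstar_unbiased|]. split; [now apply wstar_unbiased|].
  intros om1 om2 U1 U2.
  assert (Hpointwise : forall t, g w1 w2 t <= g om1 om2 t).
  { intros t. apply Rplus_le_compat; apply gterm_wstar_le; try assumption.
    - intros; now apply (hstep_pos a b).
    - now apply (Cinv_symmetric a b md1 M1).
    - intros; now apply (hstep_pos a b).
    - now apply (Cinv_symmetric a b md2 M2). }
  split.
  - intros p Hp pr1 pr2. apply rpow_le_compat.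
    + apply Rdiv_lt_0_compat; lra.
    + apply RiemannInt_P19; [lra|]. intros x _. apply rpow_le_compat; [lra | apply Hpointwise].
  - intros s1 s2 [_ Hleast1] [Hub2 _]. apply Hleast1. intros y [t [Ht ->]].
    eapply Rle_trans; [apply Hpointwise | apply Hub2]. now exists t.
Qed.
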